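(* Let $T_4=\{(x,y)\in\mathbb{N}^2 : x+y\le 5\}$. Then $\mathrm{gon}(R(T_4))=6$.
   Context: $\mathbb{N}=\{1,2,3,\dots\}$. For a Ferrers diagram $F\subset\mathbb{N}^2$, the Ferrers rook graph $R(F)$ is the simple graph with vertex set $F$ in which distinct $(x,y),(x',y')$ are adjacent iff $x=x'$ or $y=y'$. Divisors on a graph: functions $D:V\to\mathbb{Z}$, degree $\sum_v D(v)$; firing a vertex $v$ means $v$ loses $\deg(v)$ chips and each neighbor gains one; divisors are equivalent if related by a sequence of firings; $\vert D\vert$ is the set of effective (nonnegative) divisors equivalent to $D$; $D$ has positive rank if for every vertex $v$ some $D'\in\vert D\vert$ has $D'(v)>0$. The gonality $\mathrm{gon}(G)$ is the minimum degree of a divisor on $G$ with positive rank. *)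

From HB Require Import structures.
From mathcomp Require Import all_boot all_order all_algebra.
From Stdlib Require Import Relation_Operators.
Set Implicit Arguments. Unset Strict Implicit. Unset Printing Implicit Defensive.
Import Order.TTheory GRing.Theory Num.Theory.
Local Open Scope ring_scope.

(* A simple graph is given by a finite vertex type V and an adjacency relation
   adj (assumed symmetric and irreflexive where it matters). *)

Definition divisor (V : finType) := {ffun V -> int}.

Definition vdeg (V : finType) (adj : rel V) (v : V) : nat := #|[set w | adj v w]|.

Definition div_deg (V : finType) (D : divisor V) : int := \sum_(v : V) D v.

Definition fire (V : finType) (adj : rel V) (v : V) (D : divisor V) : divisor V :=
  [ffun w => if w == v then D w - (vdeg adj v)%:Z
             else if adj v w then D w + 1 else D w].

Definition fire_step (V : finType) (adj : rel V) (D D' : divisor V) : Prop :=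
  exists v, D' = fire adj v D.

Definition div_equiv (V : finType) (adj : rel V) (D D' : divisor V) : Prop :=
  clos_refl_trans (divisor V) (@fire_step V adj) D D'.

Definition effective (V : finType) (D : divisor V) : bool := [forall v, 0 <= D v].

Definition pos_rank (V : finType) (adj : rel V) (D : divisor V) : Prop :=
  forall v : V, exists D' : divisor V,
    div_equiv adj D D' /\ effective D' /\ 0 < D' v.

Definition is_gonality (V : finType) (adj : rel V) (k : int) : Prop :=
  (exists D : divisor V, pos_rank adj D /\ div_deg D = k) /\
  (forall D : divisor V, pos_rank adj D -> k <= div_deg D).

(* The staircase T_4 = {(x,y) in N^2 : x + y <= 5}, N = {1,2,...} *)
Definition inT4 (p : 'I_6 * 'I_6) : bool :=
  [&& (1 <= p.1)%N, (1 <= p.2)%N & (p.1 + p.2 <= 5)%N].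

Definition T4 : finType := {p : 'I_6 * 'I_6 | inT4 p}.

Definition rook_adj (V : finType) (pos : V -> nat * nat) : rel V :=
  fun u v => (u != v) && (((pos u).1 == (pos v).1) || ((pos u).2 == (pos v).2)).

Definition T4_pos (u : T4) : nat * nat := (nat_of_ord (val u).1, nat_of_ord (val u).2).

Definition RT4_adj : rel T4 := rook_adj T4_pos.

From mathcomp Require Import all_boot all_order all_algebra zify.
From Stdlib Require Import Relation_Operators.
Set Implicit Arguments. Unset Strict Implicit. Unset Printing Implicit Defensive.
Import Order.TTheory GRing.Theory Num.Theory.
Local Open Scope ring_scope.

(* Firing changes a divisor by the Laplacian of an integer function, so equivalent
   divisors differ by Laplacians.  Upper bound: three, two and one chips on (1,1),
   (1,2), (1,3) form a divisor of positive rank, by explicit firing scripts.  Lower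
   bound: by Dhar's burning argument, if some [D - L g] has no chip at [v] and the
   fire started at [v] burns the whole graph, then no divisor equivalent to [D] has a
   chip at [v]; such a certificate is computed for each of the 3003 effective
   divisors of degree at most 5 on the ten cells. *)

Section Laplacian.
Variables (V : finType) (adj : rel V).
Hypotheses (adj_sym : symmetric adj) (adj_irr : irreflexive adj).

Definition laplacian (f : V -> int) (u : V) : int := \sum_(w | adj u w) (f u - f w).

Lemma eq_laplacian f g : f =1 g -> laplacian f =1 laplacian g.
Proof. by move=> fg u; apply: eq_bigr => w _; rewrite !fg. Qed.

Lemma laplacian0 u : laplacian (fun=> 0) u = 0.
Proof. by rewrite /laplacian big1 // => w _; rewrite subr0. Qed.

Lemma laplacianD f g u : laplacian (fun w => f w + g w) u = laplacian f u + laplacian g u.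
Proof. by rewrite /laplacian -big_split; apply: eq_bigr => w _ /=; lia. Qed.

Lemma laplacianB f g u : laplacian (fun w => f w - g w) u = laplacian f u - laplacian g u.
Proof. by rewrite /laplacian -sumrB; apply: eq_bigr => w _ /=; lia. Qed.

Lemma sum_indicator (P : pred V) v : \sum_(w | P w) (w == v)%:Z = (P v)%:Z.
Proof.
rewrite big_mkcond (bigD1 v) //= big1 ?addr0 => [|w /negPf ->]; last by case: (P w).
by case: (P v); rewrite ?eqxx.
Qed.

Lemma fire_laplacian v D u : fire adj v D u = D u - laplacian (fun w => (w == v)%:Z) u.
Proof.
rewrite ffunE /laplacian sumrB sum_indicator; case: eqVneq => [->|uv].
  by rewrite adj_irr subr0 sumr_const /vdeg cardsE -natz.
rewrite big1 // adj_sym sub0r opprK.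
by case: (adj u v); rewrite ?addr0.
Qed.

Lemma div_equiv_laplacian D D' :
  div_equiv adj D D' -> exists f : V -> int, forall u, D' u = D u - laplacian f u.
Proof.
elim=> {D D'} [D _ [v ->]|D|D1 D2 D3 _ [f1 H1] _ [f2 H2]].
- by exists (fun w => (w == v)%:Z) => u; rewrite fire_laplacian.
- by exists (fun=> 0) => u; rewrite laplacian0 subr0.
- by exists (fun w => f1 w + f2 w) => u; rewrite H2 H1 laplacianD opprD addrA.
Qed.

Lemma sum_laplacian f : \sum_u laplacian f u = 0.
Proof.
rewrite /laplacian; under eq_bigr do rewrite sumrB.
apply/eqP; rewrite sumrB subr_eq0; apply/eqP.
rewrite (exchange_big_dep xpredT) //=; apply: eq_bigr => u _.
by apply: eq_bigl => w; rewrite adj_sym.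
Qed.

Lemma div_deg_equiv D D' : div_equiv adj D D' -> div_deg D' = div_deg D.
Proof.
case/div_equiv_laplacian=> f Df.
by rewrite /div_deg (eq_bigr _ (fun u _ => Df u)) sumrB sum_laplacian subr0.
Qed.

Lemma pos_rank_equiv D D1 : pos_rank adj D -> div_equiv adj D D1 ->
  forall v, exists f, (forall u, 0 <= D1 u - laplacian f u) /\ 0 < D1 v - laplacian f v.
Proof.
move=> Dpos /div_equiv_laplacian [f1 D1E] v.
have [D' [/div_equiv_laplacian [f' D'E] [/forallP D'eff D'v]]] := Dpos v.
exists (fun w => f' w - f1 w).
have D'E1 u : D1 u - laplacian (fun w => f' w - f1 w) u = D' u.
  by rewrite laplacianB D1E D'E; lia.
by split=> [u|]; rewrite D'E1.
Qed.

Definition fire_seq (s : seq V) (D : divisor V) : divisor V :=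
  foldl (fun D v => fire adj v D) D s.

Lemma fire_seq_equiv s D : div_equiv adj D (fire_seq s D).
Proof.
elim: s D => [|v s IH] D /=; first exact: rt_refl.
by apply: rt_trans (IH _); apply: rt_step; exists v.
Qed.

Lemma fire_seq_laplacian s D u :
  fire_seq s D u = D u - laplacian (fun w => (count_mem w s)%:Z) u.
Proof.
elim: s D => [|v s IH] D /=.
  by rewrite (eq_laplacian (g := fun=> 0)) // laplacian0 subr0.
rewrite IH fire_laplacian -addrA -opprD -laplacianD.
by congr (_ - _); apply: eq_laplacian => w /=; rewrite PoszD eq_sym.
Qed.

Lemma laplacian_ge_count f w (s : seq V) : uniq s ->
  (forall x, f x <= f w) -> (forall x, x \in s -> f x < f w) ->
  (count (adj w) s)%:Z <= laplacian f w.
Proof.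
move=> s_uniq f_le f_lt.
rewrite /laplacian (bigID (mem s)) /= -[X in X <= _]addr0.
apply: lerD; last by apply: sumr_ge0 => x _; rewrite subr_ge0.
have -> : \sum_(x | adj w x && (x \in s)) (f w - f x) = \sum_(x <- s | adj w x) (f w - f x).
  by rewrite [RHS]big_mkcond big_uniq // -big_mkcondr; apply: eq_bigl => x; rewrite andbC.
rewrite -sum1_count -natz natr_sum big_seq_cond [X in _ <= X]big_seq_cond.
by apply: ler_sum => x /andP [/f_lt xw _]; lia.
Qed.

(* Dhar's burning argument: [f] attains its maximum first at some [w] in [o]; all
   vertices before [w] have smaller [f], so [w] loses at least one chip to each
   earlier neighbour. *)
Lemma burning_order_no_chip (E f : V -> int) v (o : seq V) :
  uniq o -> (forall x, x \in o) -> head v o = v -> E v <= 0 ->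
  (forall k, (0 < k < size o)%N ->
     E (nth v o k) < (count (adj (nth v o k)) (take k o))%:Z) ->
  ~ ((forall u, 0 <= E u - laplacian f u) /\ 0 < E v - laplacian f v).
Proof.
move=> o_uniq o_all o_v Ev burnt [E_eff E_v].
pose m := [arg max_(x > v) f x]%O.
have f_le_m x : f x <= f m by rewrite /m; case: arg_maxP => // y _; apply.
have has_m : has (fun x => f x == f m) o by apply/hasP; exists m.
pose k := find (fun x => f x == f m) o; pose w := nth v o k.
have k_lt : (k < size o)%N by rewrite -has_find.
have f_w : f w = f m by apply/eqP/(nth_find v has_m).
have earlier_lt x : x \in take k o -> f x < f w.
  case/(nthP v)=> j; rewrite size_take k_lt => j_lt <-; rewrite nth_take //.
  by rewrite f_w lt_def f_le_m andbT eq_sym (before_find v j_lt).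
have f_le_w x : f x <= f w by rewrite f_w.
have lap_w := laplacian_ge_count (take_uniq k o_uniq) f_le_w earlier_lt.
case: (posnP k) => [k0 | k_pos].
  move: lap_w E_v; rewrite /w k0 take0 nth0 o_v /=; lia.
have := E_eff w; rewrite subr_ge0 => /(le_trans lap_w) count_le.
by have := burnt k; rewrite k_pos k_lt -/w ltNge count_le => /(_ isT).
Qed.

End Laplacian.

(* Computable counterparts on the cells [0, ..., n-1] of a graph with adjacency [a];
   functions and divisors on the cells are lists. *)
Definition seq_laplacian (n : nat) (a : rel nat) (g : seq int) (i : nat) : int :=
  foldr (fun j s => if a i j then g`_i - g`_j + s else s) 0 (iota 0 n).

Definition seq_fire n (a : rel nat) (g : seq int) (l : seq nat) : seq int :=
  [seq (nth 0%N l i)%:Z - seq_laplacian n a g i | i <- iota 0 n].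

Definition burning_certificate n (a : rel nat) (E : seq int) (o : seq nat) : bool :=
  [&& E`_(head 0%N o) <= 0, perm_eq o (iota 0 n) &
      all (fun k => E`_(nth 0%N o k) < (count (a (nth 0%N o k)) (take k o))%:Z)
          (iota 1 n.-1)].

Definition firing_witness n (a : rel nat) (l : seq nat) (s : seq nat) v : bool :=
  let E := seq_fire n a [seq (count_mem j s)%:Z | j <- iota 0 n] l in
  [&& all (gtn n) s, all (fun i => 0 <= E`_i) (iota 0 n) & 0 < E`_v].

Fixpoint bounded_seqs (n k : nat) : seq (seq nat) :=
  if n is n'.+1 then [seq x :: t | x <- iota 0 k.+1, t <- bounded_seqs n' (k - x)]
  else [:: [::]].

Lemma mem_bounded_seqs n k t : size t = n -> (sumn t <= k)%N -> t \in bounded_seqs n k.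
Proof.
elim: n k t => [|n IH] k [|x t] // [t_size] t_sum.
have {}t_sum : (x + sumn t <= k)%N := t_sum.
apply/allpairsPdep; exists x, t; split=> //; first by rewrite mem_iota; lia.
by apply: IH => //; lia.
Qed.

Fixpoint burn fuel n (a : rel nat) (E : seq int) (o : seq nat) : seq nat :=
  if fuel is fuel'.+1 then
    if [seq u <- iota 0 n | (u \notin o) && (E`_u < (count (a u) o)%:Z)] is u :: _
    then burn fuel' n a E (rcons o u) else o
  else o.

(* Dhar's algorithm: fire the unburnt cells until the fire started at [v] burns
   everything.  The search is not verified: only the certificate it returns is. *)
Fixpoint dhar fuel n (a : rel nat) (l : seq nat) v (g : seq int) : seq int * seq nat :=
  let o := burn n n a (seq_fire n a g l) [:: v] in
  if fuel is fuel'.+1 then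
    if size o == n then (g, o)
    else dhar fuel' n a l v [seq g`_i + (i \notin o)%:Z | i <- iota 0 n]
  else (g, o).

Definition dhar_reduced n (a : rel nat) (l : seq nat) v : bool :=
  let: (g, o) := dhar (n * n) n a l v (nseq n 0) in
  burning_certificate n a (seq_fire n a g l) o.

(* Under call-by-value evaluation [has] would run the search for every vertex. *)
Fixpoint has_dhar_reduced n (a : rel nat) (l : seq nat) (vs : seq nat) : bool :=
  if vs is v :: vs' then (if dhar_reduced n a l v then true else has_dhar_reduced n a l vs')
  else false.

Lemma has_dhar_reducedE n a l vs : has_dhar_reduced n a l vs = has (dhar_reduced n a l) vs.
Proof. by elim: vs => //= v vs ->; case: dhar_reduced. Qed.

Lemma seq_laplacianE n a g i :
  seq_laplacian n a g i = \sum_(j <- iota 0 n | a i j) (g`_i - g`_j).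
Proof.
rewrite /seq_laplacian; elim: (iota 0 n) => [|j s IH]; first by rewrite big_nil.
by rewrite big_cons /= IH.
Qed.

Section CellIndexing.
Variables (V : finType) (adj : rel V) (n : nat) (a : rel nat).
Variables (cell : nat -> V) (idx : V -> nat).
Hypotheses (adj_sym : symmetric adj) (adj_irr : irreflexive adj).
Hypotheses (idx_lt : forall u, (idx u < n)%N) (idxK : cancel idx cell).
Hypothesis cellK : forall i, (i < n)%N -> idx (cell i) = i.
Hypothesis adj_cell : forall i j, (i < n)%N -> (j < n)%N -> adj (cell i) (cell j) = a i j.

Lemma big_cells (P : pred V) (F : V -> int) :
  \sum_(u | P u) F u = \sum_(i <- iota 0 n | P (cell i)) F (cell i).
Proof.
rewrite (reindex (fun i : 'I_n => cell i)) /=.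
  by rewrite -(big_mkord (fun i => P (cell i)) (fun i => F (cell i))) /index_iota subn0.
exists (fun u => Ordinal (idx_lt u)) => [i _ | u _]; last exact: idxK.
by apply: val_inj; rewrite /= cellK.
Qed.

Lemma laplacian_cell (G : V -> int) g i :
  (forall j, (j < n)%N -> G (cell j) = g`_j) -> (i < n)%N ->
  laplacian adj G (cell i) = seq_laplacian n a g i.
Proof.
move=> Gg i_lt; rewrite /laplacian big_cells seq_laplacianE big_seq_cond [RHS]big_seq_cond.
apply: eq_big => [j | j /andP [j_in _]].
  by rewrite mem_iota /=; case: ltnP => //= j_lt; rewrite adj_cell.
by move: j_in; rewrite mem_iota => /andP [_ j_lt]; rewrite !Gg.
Qed.

Lemma cell_eq i j : (i < n)%N -> (j < n)%N -> (cell i == cell j) = (i == j).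
Proof. by move=> i_lt j_lt; apply/eqP/eqP => [/(congr1 idx) | ->]; rewrite ?cellK. Qed.

Lemma burning_certificate_no_chip (D : V -> int) l g o f :
  (forall i, (i < n)%N -> D (cell i) = (nth 0%N l i)%:Z) ->
  burning_certificate n a (seq_fire n a g l) o ->
  ~ ((forall u, 0 <= D u - laplacian adj f u) /\
     0 < D (cell (head 0%N o)) - laplacian adj f (cell (head 0%N o))).
Proof.
move=> Dl /and3P [E_v o_perm burnt].
pose G u := g`_(idx u); pose E u := D u - laplacian adj G u.
have o_lt j : j \in o -> (j < n)%N by rewrite (perm_mem o_perm) mem_iota.
have o_size : size o = n by rewrite (perm_size o_perm) size_iota.
have E_cell i : (i < n)%N -> E (cell i) = (seq_fire n a g l)`_i.
  move=> i_lt; rewrite /E Dl // (laplacian_cell (g := g)) // => [|j j_lt].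
    by rewrite (nth_map 0%N) ?size_iota // nth_iota.
  by rewrite /G cellK.
have n_gt0 : (0 < n)%N := leq_ltn_trans (leq0n _) (idx_lt (cell 0)).
have o_head : head 0%N o \in o by rewrite -nth0 mem_nth ?o_size.
move=> [D_eff D_v].
apply: (@burning_order_no_chip _ adj E (fun u => f u - G u) (cell (head 0%N o)) (map cell o)).
- rewrite map_inj_in_uniq ?(perm_uniq o_perm) ?iota_uniq //.
  by move=> i j /o_lt i_lt /o_lt j_lt /(congr1 idx); rewrite !cellK.
- by move=> u; rewrite -(idxK u) map_f // (perm_mem o_perm) mem_iota idx_lt.
- by case: (o).
- by rewrite E_cell ?o_lt.
- move=> k; rewrite size_map o_size => /andP [k_gt0 k_lt].
  have o_k : nth 0%N o k \in o by rewrite mem_nth ?o_size.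
  rewrite (nth_map 0%N) ?o_size // E_cell ?o_lt // -map_take count_map.
  have := allP burnt k; rewrite mem_iota k_gt0 add1n prednK // k_lt => /(_ isT).
  congr (_ < Posz _); apply: eq_in_count => j /mem_take j_o /=.
  by rewrite adj_cell ?o_lt.
- have EfG u : E u - laplacian adj (fun w => f w - G w) u = D u - laplacian adj f u.
    by rewrite laplacianB /E; lia.
  by split=> [u|]; rewrite EfG.
Qed.

Lemma gonality_gt_of_dhar k :
  all (fun l => has_dhar_reduced n a l (iota 0 n)) (bounded_seqs n k) ->
  forall D, pos_rank adj D -> k%:Z < div_deg D.
Proof.
move=> certs D D_rank; rewrite ltNge; apply/negP => deg_le.
have [D1 [D_D1 [/forallP D1_eff _]]] := D_rank (cell 0).
pose l := [seq `|D1 (cell i)|%N | i <- iota 0 n].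
have D1l i : (i < n)%N -> D1 (cell i) = (nth 0%N l i)%:Z.
  by move=> i_lt; rewrite (nth_map 0%N) ?size_iota // nth_iota // gez0_abs.
have l_sum : (sumn l)%:Z = div_deg D1.
  rewrite /div_deg big_cells sumnE big_map -natz natr_sum.
  by apply: eq_bigr => i _; rewrite natz gez0_abs.
have l_mem : l \in bounded_seqs n k.
  apply: mem_bounded_seqs; first by rewrite size_map size_iota.
  by rewrite -lez_nat l_sum (div_deg_equiv adj_sym adj_irr D_D1).
move: (allP certs l l_mem); rewrite has_dhar_reducedE => /hasP [v _].
rewrite /dhar_reduced; case: dhar => g o cert.
have [f [f_eff f_pos]] := pos_rank_equiv adj_sym adj_irr D_rank D_D1 (cell (head 0%N o)).
exact: (burning_certificate_no_chip D1l cert (conj f_eff f_pos)).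
Qed.

Definition seq_divisor (l : seq nat) : divisor V := [ffun u => (nth 0%N l (idx u))%:Z].

Lemma div_deg_seq_divisor l : size l = n -> div_deg (seq_divisor l) = (sumn l)%:Z.
Proof.
move=> l_size; rewrite /div_deg big_cells sumnE -natz natr_sum.
rewrite -{2}[l](mkseq_nth 0%N) l_size big_map big_seq [RHS]big_seq.
by apply: eq_bigr => i; rewrite mem_iota ffunE natz => /andP [_ /cellK ->].
Qed.

Lemma pos_rank_of_firing_witnesses l (ss : seq (seq nat)) :
  all (fun v => firing_witness n a l (nth [::] ss v) v) (iota 0 n) ->
  pos_rank adj (seq_divisor l).
Proof.
move=> wit u.
have /(allP wit) /and3P [s_lt E_eff E_u] : idx u \in iota 0 n by rewrite mem_iota idx_lt.
set s := nth [::] ss (idx u) in s_lt E_eff E_u.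
set E := seq_fire _ _ _ _ in E_eff E_u.
have firedE i : (i < n)%N -> fire_seq adj (map cell s) (seq_divisor l) (cell i) = E`_i.
  move=> i_lt; rewrite fire_seq_laplacian // ffunE cellK //.
  rewrite (laplacian_cell (g := [seq (count_mem j s)%:Z | j <- iota 0 n])) //.
    by rewrite (nth_map 0%N) ?size_iota // nth_iota.
  move=> j j_lt; rewrite (nth_map 0%N) ?size_iota // nth_iota // count_map; congr Posz.
  by apply: eq_in_count => x /(allP s_lt) x_lt /=; rewrite cell_eq.
exists (fire_seq adj (map cell s) (seq_divisor l)); split; first exact: fire_seq_equiv.
split; last by rewrite -(idxK u) firedE.
apply/forallP => w; rewrite -(idxK w) firedE //.
by apply: (allP E_eff); rewrite mem_iota idx_lt.
Qed.

End CellIndexing.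

Lemma rook_adj_sym (V : finType) (pos : V -> nat * nat) : symmetric (rook_adj pos).
Proof. by move=> u w; rewrite /rook_adj eq_sym [_.1 == _]eq_sym [_.2 == _]eq_sym. Qed.

Lemma rook_adj_irr (V : finType) (pos : V -> nat * nat) : irreflexive (rook_adj pos).
Proof. by move=> u; rewrite /rook_adj eqxx. Qed.

Definition T4_cells : seq (nat * nat) :=
  [:: (1,1); (1,2); (1,3); (1,4); (2,1); (2,2); (2,3); (3,1); (3,2); (4,1)]%N.

Definition T4_cell_adj : rel nat := fun i j =>
  let c := nth (0, 0)%N T4_cells in
  (i != j) && (((c i).1 == (c j).1) || ((c i).2 == (c j).2)).

Definition T4_corner : T4 := exist inT4 (@Ordinal 6 1 isT, @Ordinal 6 1 isT) isT.

Definition T4_cell (i : nat) : T4 :=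
  let c := nth (0, 0)%N T4_cells i in insubd T4_corner (inord c.1, inord c.2).

Definition T4_index (u : T4) : nat := index (T4_pos u) T4_cells.

Lemma T4_cells_in : all (fun c => [&& 1 <= c.1, 1 <= c.2 & c.1 + c.2 <= 5]%N) T4_cells.
Proof. by []. Qed.

Lemma T4_pos_cell i : (i < 10)%N -> T4_pos (T4_cell i) = nth (0, 0)%N T4_cells i.
Proof.
move=> i_lt; have := all_nthP (0, 0)%N T4_cells_in i i_lt; rewrite /T4_cell /T4_pos.
case: (nth _ T4_cells i) => x y /and3P /= [x_ge1 y_ge1 xy_le5].
have [x_lt6 y_lt6] : (x < 6)%N /\ (y < 6)%N by lia.
by rewrite insubdK /= ?inordK // unfold_in /inT4 /= !inordK // x_ge1 y_ge1 xy_le5.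
Qed.

Lemma T4_pos_in u : T4_pos u \in T4_cells.
Proof.
case: u => [[[x x_lt] [y y_lt]]]; rewrite /inT4 /T4_pos /= => {x_lt y_lt}.
by case: x => [|[|[|[|[|[|x]]]]]]; case: y => [|[|[|[|[|[|y]]]]]].
Qed.

Lemma T4_index_lt u : (T4_index u < 10)%N.
Proof. by rewrite /T4_index -[10%N]/(size T4_cells) index_mem T4_pos_in. Qed.

Lemma T4_indexK : cancel T4_index T4_cell.
Proof.
move=> u; apply: val_inj; rewrite /T4_cell /T4_index nth_index ?T4_pos_in //.
by case: u => [[x y] u_in] /=; rewrite !inord_val insubdK.
Qed.

Lemma T4_cellK i : (i < 10)%N -> T4_index (T4_cell i) = i.
Proof. by move=> i_lt; rewrite /T4_index T4_pos_cell // index_uniq. Qed.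

Lemma RT4_adj_cell i j : (i < 10)%N -> (j < 10)%N ->
  RT4_adj (T4_cell i) (T4_cell j) = T4_cell_adj i j.
Proof.
move=> i_lt j_lt; rewrite /RT4_adj /rook_adj !T4_pos_cell //.
by congr (~~ _ && _); apply/eqP/eqP => [/(congr1 T4_index) | ->]; rewrite ?T4_cellK.
Qed.

Lemma T4_dhar_reduced :
  all (fun l => has_dhar_reduced 10 T4_cell_adj l (iota 0 10)) (bounded_seqs 10 5).
Proof. by vm_compute. Qed.

(* A cell (x,y) with x > 1 receives a chip when the line x = 1 fires, and (1,4) when
   every other cell fires. *)
Definition T4_gonal_divisor : seq nat := [:: 3; 2; 1; 0; 0; 0; 0; 0; 0; 0]%N.

Definition T4_firing_scripts : seq (seq nat) :=
  [:: [::]; [::]; [::]; [:: 0; 1; 2; 4; 5; 6; 7; 8; 9]; [:: 0; 1; 2; 3]; [:: 0; 1; 2; 3];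
      [:: 0; 1; 2; 3]; [:: 0; 1; 2; 3]; [:: 0; 1; 2; 3]; [:: 0; 1; 2; 3]]%N.

Lemma T4_firing_witnesses :
  all (fun v => firing_witness 10 T4_cell_adj T4_gonal_divisor
                                (nth [::] T4_firing_scripts v) v) (iota 0 10).
Proof. by vm_compute. Qed.

Theorem theorem4p4 : is_gonality RT4_adj 6%:Z.
Proof.
have sym := rook_adj_sym T4_pos; have irr := rook_adj_irr T4_pos.
have gon_gt := gonality_gt_of_dhar sym irr T4_index_lt T4_indexK T4_cellK RT4_adj_cell
  T4_dhar_reduced.
split; last by move=> D /gon_gt; lia.
exists (seq_divisor T4_index T4_gonal_divisor); split.
  exact: (pos_rank_of_firing_witnesses sym irr T4_index_lt T4_indexK T4_cellK RT4_adj_cell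
    T4_firing_witnesses).
by rewrite (div_deg_seq_divisor T4_index_lt T4_indexK T4_cellK).
Qed.
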